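(* As $\rho\to0$, $$k(\rho)=\rho^\theta+O(\rho^{3\theta}),\qquad k'(\rho)=\frac{\sqrt{p'(\rho)}}{\rho+\varepsilon p(\rho)}=\theta\rho^{\theta-1}+O(\rho^{3\theta-1}),$$ $$k''(\rho)=\theta(\theta-1)\rho^{\theta-2}+O(\rho^{3\theta-2}),\qquad k^{(3)}(\rho)=\theta(\theta-1)(\theta-2)\rho^{\theta-3}+O(\rho^{3\theta-3}).$$
   Context: Fix $\varepsilon>0$. The pressure $p$ is smooth on $(0,\infty)$ with $p'>0$ for $\rho>0$ and, for all sufficiently small $\rho>0$, $p(\rho)=\kappa\rho^\gamma(1+P(\rho))$ with $\gamma\in(1,3)$, $\kappa=\frac{(\gamma-1)^2}{4\gamma}$, $|P^{(n)}(\rho)|\le C\rho^{\gamma-1-n}$ for $0\le n\le4$. $\theta=\frac{\gamma-1}{2}$ and $k(\rho)=\int_0^\rho\frac{\sqrt{p'(s)}}{s+\varepsilon p(s)}ds$. *)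

From Stdlib Require Import Reals.
From Coquelicot Require Import Coquelicot.
Open Scope R_scope.

Definition kappa (gamma : R) : R := (gamma - 1) ^ 2 / (4 * gamma).

Definition theta (gamma : R) : R := (gamma - 1) / 2.

Definition k_integrand (eps : R) (p : R -> R) (s : R) : R :=
  sqrt (Derive p s) / (s + eps * p s).

Definition k_fun (eps : R) (p : R -> R) (rho : R) : R :=
  RInt_gen (k_integrand eps p) (at_right 0) (at_point rho).

(* Near 0 the pressure law gives p'(s) = theta^2 s^(2 theta) (1 + B(s)) and
   s + eps p(s) = s (1 + D(s)), where B and D are O(s^(2 theta)) together with their first two
   derivatives (at the orders obtained by differentiating formally).  Such remainders are
   tracked by the class [bigO_C2], which is stable under sums, products and composition with
   the functions sqrt(1 + x) - 1 and 1/(1 + x) - 1; hence the integrand of k is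
   theta s^(theta - 1) + O(s^(3 theta - 1)) with a remainder that may be differentiated twice
   termwise.  The integrand is nonnegative, so the integral from x to rho increases as x
   decreases to 0 and converges, to rho^theta + O(rho^(3 theta)); finally k', k'', k''' are the
   integrand and its first two derivatives. *)

From Stdlib Require Import Reals Lra Lia Psatz Classical.
From Coquelicot Require Import Coquelicot.
Open Scope R_scope.

Lemma Rpower_pos (s a : R) : 0 < Rpower s a.
Proof. apply exp_pos. Qed.

Lemma Rpower_le_base_le_1 (s a b : R) :
  0 < s <= 1 -> b <= a -> Rpower s a <= Rpower s b.
Proof.
  intros [Hs Hs1] Hab; unfold Rpower.
  assert (Hln : ln s <= 0) by (rewrite <- ln_1; apply ln_le; lra).
  destruct (Req_dec (a * ln s) (b * ln s)) as [E|E]; [rewrite E; lra|].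
  left; apply exp_increasing; nra.
Qed.

Lemma Rpower_small (a eta : R) : 0 < a -> 0 < eta ->
  exists del, 0 < del /\ forall s, 0 < s < del -> Rpower s a <= eta.
Proof.
  intros Ha He; exists (Rpower eta (/ a)); split; [apply Rpower_pos|].
  intros s Hs.
  replace eta with (Rpower (Rpower eta (/ a)) a).
  - apply Rle_Rpower_l; lra.
  - rewrite Rpower_mult, Rinv_l, Rpower_1; lra.
Qed.

Lemma is_derive_Rpower (a s : R) : 0 < s ->
  is_derive (fun x => Rpower x a) s (a * Rpower s (a - 1)).
Proof. intros Hs; apply is_derive_Reals, derivable_pt_lim_power, Hs. Qed.

Lemma is_derive_scal_Rpower (c a s : R) : 0 < s ->
  is_derive (fun x => c * Rpower x a) s (c * a * Rpower s (a - 1)).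
Proof.
  intros Hs; rewrite Rmult_assoc.
  apply (is_derive_scal (fun x => Rpower x a)), is_derive_Rpower, Hs.
Qed.

Lemma Rpower_plus_1 (s a : R) : 0 < s -> Rpower s (a + 1) = Rpower s a * s.
Proof. intros Hs; rewrite Rpower_plus, Rpower_1 by exact Hs; reflexivity. Qed.

Lemma is_derive_eq (f : R -> R) (x l l' : R) :
  is_derive f x l -> l = l' -> is_derive f x l'.
Proof. intros H <-; exact H. Qed.

Lemma is_derive_Rmult (f g : R -> R) (x df dg : R) :
  is_derive f x df -> is_derive g x dg ->
  is_derive (fun t => f t * g t) x (df * g x + f x * dg).
Proof. intros Hf Hg; apply (is_derive_mult f g); auto; apply Rmult_comm. Qed.

Lemma open_interval_0 (d : R) : open (fun s => 0 < s < d).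
Proof. apply open_and; [apply open_gt|apply open_lt]. Qed.

Lemma is_derive_ext_open (D : R -> Prop) (h g : R -> R) (y l : R) : open D -> D y ->
  (forall t, D t -> h t = g t) -> is_derive h y l -> is_derive g y l.
Proof. intros HD Hy E; apply is_derive_ext_loc, (filter_imp _ _ E (HD y Hy)). Qed.

Lemma Rabs_mult_le_Rpower (x y C C' s a b : R) : 0 <= C ->
  Rabs x <= C * Rpower s a -> Rabs y <= C' * Rpower s b ->
  Rabs (x * y) <= C * C' * Rpower s (a + b).
Proof.
  intros HC Hx Hy; rewrite Rabs_mult, Rpower_plus.
  pose proof (Rabs_pos x); pose proof (Rabs_pos y).
  pose proof (Rpower_pos s a); pose proof (Rpower_pos s b).
  apply Rle_trans with (C * Rpower s a * Rabs y); [apply Rmult_le_compat_r; lra|].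
  replace (C * C' * (Rpower s a * Rpower s b)) with (C * Rpower s a * (C' * Rpower s b))
    by ring.
  apply Rmult_le_compat_l; nra.
Qed.

Lemma interval_0_Rmin (s d d' : R) : 0 < s < Rmin d d' -> 0 < s < d /\ 0 < s < d'.
Proof. intros Hs; pose proof (Rmin_l d d'); pose proof (Rmin_r d d'); lra. Qed.

(* The constraint [d <= 1] makes the class antitone in [a] (see [bigO_C2_weaken]). *)
Definition bigO_C2 (a : R) (u u1 u2 : R -> R) : Prop :=
  exists d C, 0 < d <= 1 /\ 0 <= C /\ forall s, 0 < s < d ->
    is_derive u s (u1 s) /\ is_derive u1 s (u2 s) /\
    Rabs (u s) <= C * Rpower s a /\ Rabs (u1 s) <= C * Rpower s (a - 1) /\
    Rabs (u2 s) <= C * Rpower s (a - 2).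

Lemma bigO_C2_weaken (a b : R) u u1 u2 :
  b <= a -> bigO_C2 a u u1 u2 -> bigO_C2 b u u1 u2.
Proof.
  intros Hab (d & C & Hd & HC & H); exists d, C; do 2 (split; [lra|]).
  intros s Hs; destruct (H s Hs) as (D1 & D2 & B0 & B1 & B2).
  refine (conj D1 (conj D2 (conj _ (conj _ _)))); eapply Rle_trans; try eassumption;
    apply Rmult_le_compat_l; auto; apply Rpower_le_base_le_1; lra.
Qed.

Lemma bigO_C2_plus a u u1 u2 v v1 v2 : bigO_C2 a u u1 u2 -> bigO_C2 a v v1 v2 ->
  bigO_C2 a (fun s => u s + v s) (fun s => u1 s + v1 s) (fun s => u2 s + v2 s).
Proof.
  intros (d & C & Hd & HC & H) (d' & C' & Hd' & HC' & H').
  exists (Rmin d d'), (C + C'); pose proof (Rmin_l d d').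
  split; [split; [apply Rmin_glb_lt|]; lra|split; [lra|]].
  intros s Hs; apply interval_0_Rmin in Hs as [Hs Hs'].
  destruct (H s Hs) as (D1 & D2 & B0 & B1 & B2).
  destruct (H' s Hs') as (D1' & D2' & B0' & B1' & B2').
  pose proof (Rpower_pos s a); pose proof (Rpower_pos s (a - 1));
    pose proof (Rpower_pos s (a - 2)).
  refine (conj (is_derive_plus _ _ _ _ _ D1 D1')
           (conj (is_derive_plus _ _ _ _ _ D2 D2') (conj _ (conj _ _))));
    eapply Rle_trans; try apply Rabs_triang; nra.
Qed.

Lemma bigO_C2_mult a b u u1 u2 v v1 v2 : bigO_C2 a u u1 u2 -> bigO_C2 b v v1 v2 ->
  bigO_C2 (a + b) (fun s => u s * v s) (fun s => u1 s * v s + u s * v1 s)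
    (fun s => u2 s * v s + 2 * (u1 s * v1 s) + u s * v2 s).
Proof.
  intros (d & C & Hd & HC & H) (d' & C' & Hd' & HC' & H').
  exists (Rmin d d'), (4 * (C * C')); pose proof (Rmin_l d d').
  split; [split; [apply Rmin_glb_lt|]; lra|split; [nra|]].
  intros s Hs; apply interval_0_Rmin in Hs as [Hs Hs'].
  destruct (H s Hs) as (D1 & D2 & B0 & B1 & B2).
  destruct (H' s Hs') as (D1' & D2' & B0' & B1' & B2').
  pose proof (Rpower_pos s (a + b)); pose proof (Rpower_pos s (a + b - 1));
    pose proof (Rpower_pos s (a + b - 2)).
  assert (HCC : 0 <= C * C') by nra.
  refine (conj (is_derive_Rmult _ _ _ _ _ D1 D1') (conj _ (conj _ (conj _ _)))).
  - eapply is_derive_eq; [apply (is_derive_plus _ _ _ _ _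
      (is_derive_Rmult _ _ _ _ _ D2 D1') (is_derive_Rmult _ _ _ _ _ D1 D2'))|].
    unfold plus; simpl; ring.
  - pose proof (Rabs_mult_le_Rpower _ _ _ _ _ _ _ HC B0 B0'); nra.
  - pose proof (Rabs_mult_le_Rpower _ _ _ _ _ _ _ HC B1 B0').
    pose proof (Rabs_mult_le_Rpower _ _ _ _ _ _ _ HC B0 B1').
    replace (a - 1 + b) with (a + b - 1) in * by ring.
    replace (a + (b - 1)) with (a + b - 1) in * by ring.
    eapply Rle_trans; [apply Rabs_triang|nra].
  - pose proof (Rabs_mult_le_Rpower _ _ _ _ _ _ _ HC B2 B0').
    pose proof (Rabs_mult_le_Rpower _ _ _ _ _ _ _ HC B1 B1').
    pose proof (Rabs_mult_le_Rpower _ _ _ _ _ _ _ HC B0 B2').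
    replace (a - 2 + b) with (a + b - 2) in * by ring.
    replace (a + (b - 2)) with (a + b - 2) in * by ring.
    replace (a - 1 + (b - 1)) with (a + b - 2) in * by ring.
    eapply Rle_trans; [apply Rabs_triang|].
    eapply Rle_trans; [apply Rplus_le_compat_r, Rabs_triang|].
    rewrite (Rabs_mult 2), (Rabs_right 2) by lra; nra.
Qed.

Lemma bigO_C2_const c : bigO_C2 0 (fun _ => c) (fun _ => 0) (fun _ => 0).
Proof.
  exists 1, (Rabs c); split; [lra|split; [apply Rabs_pos|]].
  intros s Hs; rewrite Rpower_O, Rabs_R0 by lra.
  pose proof (Rpower_pos s (0 - 1)); pose proof (Rpower_pos s (0 - 2));
    pose proof (Rabs_pos c).
  refine (conj (is_derive_const c s) (conj (is_derive_const 0 s) (conj _ (conj _ _)))); nra.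
Qed.

Lemma bigO_C2_id : bigO_C2 1 (fun s => s) (fun _ => 1) (fun _ => 0).
Proof.
  exists 1, 1; split; [lra|split; [lra|]].
  intros s Hs; rewrite Rpower_1, Rminus_diag, Rpower_O, Rabs_R0, Rabs_R1, Rabs_right by lra.
  pose proof (Rpower_pos s (1 - 2)).
  refine (conj (is_derive_id s) (conj (is_derive_const 1 s) (conj _ (conj _ _)))); lra.
Qed.

Lemma bigO_C2_Rpower a : bigO_C2 a (fun s => Rpower s a) (fun s => a * Rpower s (a - 1))
  (fun s => a * (a - 1) * Rpower s (a - 1 - 1)).
Proof.
  exists 1, (1 + Rabs a + Rabs (a * (a - 1))); split; [lra|].
  pose proof (Rabs_pos a); pose proof (Rabs_pos (a * (a - 1))).
  split; [lra|]; intros s Hs.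
  pose proof (Rpower_pos s a); pose proof (Rpower_pos s (a - 1));
    pose proof (Rpower_pos s (a - 2)).
  refine (conj (is_derive_Rpower a s ltac:(lra))
           (conj (is_derive_scal_Rpower a (a - 1) s ltac:(lra)) (conj _ (conj _ _)))).
  - rewrite Rabs_right by lra; nra.
  - rewrite Rabs_mult, (Rabs_right (Rpower _ _)) by lra; nra.
  - replace (a - 1 - 1) with (a - 2) by ring.
    rewrite Rabs_mult, (Rabs_right (Rpower _ _)) by lra; nra.
Qed.

Lemma bigO_C2_small a u u1 u2 : bigO_C2 a u u1 u2 -> 0 < a -> forall eta, 0 < eta ->
  exists del, 0 < del /\ forall s, 0 < s < del -> Rabs (u s) <= eta.
Proof.
  intros (d & C & Hd & HC & H) Ha eta He.
  assert (Hq : 0 < eta / (C + 1)) by (apply Rdiv_lt_0_compat; lra).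
  destruct (Rpower_small a _ Ha Hq) as (del & Hdel & Hsmall).
  exists (Rmin d del); split; [apply Rmin_glb_lt; lra|].
  intros s Hs; apply interval_0_Rmin in Hs as [Hs Hs'].
  destruct (H s Hs) as (_ & _ & B0 & _).
  specialize (Hsmall s Hs').
  assert (C * Rpower s a <= C * (eta / (C + 1))) by (apply Rmult_le_compat_l; auto).
  assert (C * (eta / (C + 1)) <= eta).
  { apply Rle_trans with ((C + 1) * (eta / (C + 1))); [|right; field; lra].
    apply Rmult_le_compat_r; lra. }
  lra.
Qed.

Definition C2_bounded_near_0 (K : R) (phi phi1 phi2 : R -> R) : Prop :=
  forall x, Rabs x <= 1/2 -> is_derive phi x (phi1 x) /\ is_derive phi1 x (phi2 x) /\
    Rabs (phi x) <= K * Rabs x /\ Rabs (phi1 x) <= K /\ Rabs (phi2 x) <= K.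

Lemma bigO_C2_comp a u u1 u2 (phi phi1 phi2 : R -> R) K :
  bigO_C2 a u u1 u2 -> 0 < a -> 0 <= K -> C2_bounded_near_0 K phi phi1 phi2 ->
  bigO_C2 a (fun s => phi (u s)) (fun s => phi1 (u s) * u1 s)
    (fun s => phi2 (u s) * (u1 s * u1 s) + phi1 (u s) * u2 s).
Proof.
  intros Hu Ha HK Hphi.
  destruct (bigO_C2_small _ _ _ _ Hu Ha (1/2)) as (del & Hdel & Hsmall); [lra|].
  destruct Hu as (d & C & Hd & HC & H).
  exists (Rmin d del), (K * (C * C + C)); pose proof (Rmin_l d del).
  split; [split; [apply Rmin_glb_lt|]; lra|split; [nra|]].
  intros s Hs; apply interval_0_Rmin in Hs as [Hs Hs'].
  destruct (H s Hs) as (D1 & D2 & B0 & B1 & B2).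
  destruct (Hphi (u s) (Hsmall s Hs')) as (P1 & P2 & Q0 & Q1 & Q2).
  pose proof (Rpower_pos s a); pose proof (Rpower_pos s (a - 1));
    pose proof (Rpower_pos s (a - 2)).
  assert (HCC : 0 <= C * C) by nra.
  pose proof (Rabs_pos (u s)); pose proof (Rabs_pos (u1 s)); pose proof (Rabs_pos (u2 s)).
  pose proof (Rabs_pos (phi1 (u s))); pose proof (Rabs_pos (phi2 (u s))).
  refine (conj _ (conj _ (conj _ (conj _ _)))).
  - eapply is_derive_eq; [apply (is_derive_comp phi u s _ _ P1 D1)|].
    apply Rmult_comm.
  - eapply is_derive_eq;
      [apply (is_derive_Rmult _ _ _ _ _ (is_derive_comp phi1 u s _ _ P2 D1) D2)|].
    unfold scal; simpl; unfold mult; simpl; ring.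
  - assert (K * Rabs (u s) <= K * (C * Rpower s a)) by (apply Rmult_le_compat_l; auto).
    assert (0 <= K * (C * C) * Rpower s a) by (apply Rmult_le_pos; nra).
    nra.
  - rewrite Rabs_mult.
    assert (Rabs (phi1 (u s)) * Rabs (u1 s) <= K * (C * Rpower s (a - 1)))
      by (apply Rmult_le_compat; auto).
    assert (0 <= K * (C * C) * Rpower s (a - 1)) by (apply Rmult_le_pos; nra).
    nra.
  - eapply Rle_trans; [apply Rabs_triang|]; rewrite !Rabs_mult.
    pose proof (Rabs_mult_le_Rpower _ _ _ _ _ _ _ HC B1 B1) as B11.
    rewrite Rabs_mult in B11; replace (a - 1 + (a - 1)) with (2 * a - 2) in B11 by ring.
    assert (Rpower s (2 * a - 2) <= Rpower s (a - 2))
      by (apply Rpower_le_base_le_1; lra).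
    assert (Rabs (phi2 (u s)) * (Rabs (u1 s) * Rabs (u1 s)) <= K * (C * C * Rpower s (a - 2))).
    { apply Rmult_le_compat; auto; [apply Rmult_le_pos; auto|].
      eapply Rle_trans; [exact B11|]; apply Rmult_le_compat_l; auto. }
    assert (Rabs (phi1 (u s)) * Rabs (u2 s) <= K * (C * Rpower s (a - 2)))
      by (apply Rmult_le_compat; auto).
    nra.
Qed.

Lemma sqrt_1_plus_C2_bounded : C2_bounded_near_0 1 (fun y => sqrt (1 + y) - 1)
  (fun y => / (2 * sqrt (1 + y))) (fun y => - / (4 * (1 + y) * sqrt (1 + y))).
Proof.
  intros x Hx; apply Rabs_le_between in Hx.
  assert (Hp : 0 < 1 + x) by lra.
  pose proof (sqrt_lt_R0 _ Hp) as Ht; pose proof (sqrt_sqrt (1 + x) (Rlt_le _ _ Hp)) as Ht2.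
  assert (Ht7 : 7/10 <= sqrt (1 + x)) by nra.
  assert (Hinv : forall y, 1 <= y -> Rabs (/ y) <= 1).
  { intros y Hy; rewrite Rabs_right, <- Rinv_1 by (apply Rle_ge, Rlt_le, Rinv_0_lt_compat; lra).
    apply Rinv_le_contravar; lra. }
  refine (conj _ (conj _ (conj _ (conj _ _)))).
  - auto_derive; [lra|]; field; lra.
  - auto_derive; [repeat split; lra|].
    replace (4 * (1 + x) * sqrt (1 + x))
      with (4 * (sqrt (1 + x) * sqrt (1 + x)) * sqrt (1 + x)) by (rewrite Ht2; ring).
    field; lra.
  - rewrite Rmult_1_l; apply sqrt_var_maj, Rabs_le_between; lra.
  - apply Hinv; lra.
  - rewrite Rabs_Ropp; apply Hinv; nra.
Qed.

Lemma inv_1_plus_C2_bounded : C2_bounded_near_0 16 (fun y => / (1 + y) - 1)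
  (fun y => - / ((1 + y) * (1 + y))) (fun y => 2 / ((1 + y) * (1 + y) * (1 + y))).
Proof.
  intros x Hx; apply Rabs_le_between in Hx.
  assert (Hinv : forall y c, / c <= y -> 0 < c -> Rabs (/ y) <= c).
  { intros y c Hy Hc; rewrite Rabs_right by (apply Rle_ge, Rlt_le, Rinv_0_lt_compat;
      apply Rlt_le_trans with (/ c); [apply Rinv_0_lt_compat|]; lra).
    rewrite <- (Rinv_inv c); apply Rinv_le_contravar; [apply Rinv_0_lt_compat|]; lra. }
  refine (conj _ (conj _ (conj _ (conj _ _)))).
  - auto_derive; [lra|]; field; lra.
  - auto_derive; [nra|]; field; lra.
  - replace (/ (1 + x) - 1) with (- x * / (1 + x)) by (field; lra).
    rewrite Rabs_mult, Rabs_Ropp.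
    pose proof (Rabs_pos x); pose proof (Hinv (1 + x) 2 ltac:(lra) ltac:(lra)); nra.
  - rewrite Rabs_Ropp; apply Hinv; nra.
  - unfold Rdiv; rewrite Rabs_mult, Rabs_right by lra.
    pose proof (Hinv ((1 + x) * (1 + x) * (1 + x)) 8 ltac:(nra) ltac:(lra)); lra.
Qed.

Definition smooth_on (D : R -> Prop) (f : R -> R) : Prop :=
  forall n x, D x -> ex_derive_n f n x.

Lemma Derive_n_Derive (f : R -> R) n t :
  Derive_n (Derive f) n t = Derive_n f (S n) t.
Proof. rewrite <- Nat.add_1_r; exact (Derive_n_comp f n 1 t). Qed.

Lemma ex_derive_n_Derive (f : R -> R) n x :
  ex_derive_n f (S n) x -> ex_derive_n (Derive f) n x.
Proof.
  destruct n as [|n]; [intros; exact I|]; simpl; intros H.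
  apply (ex_derive_ext (Derive_n f (S n))); [|exact H]; intros t.
  symmetry; exact (Derive_n_Derive f n t).
Qed.

Lemma ex_derive_n_S (f : R -> R) n x :
  ex_derive f x -> ex_derive_n (Derive f) n x -> ex_derive_n f (S n) x.
Proof.
  destruct n as [|n]; [intros Hf _; exact Hf|]; simpl; intros _ H.
  apply (ex_derive_ext (Derive_n (Derive f) n)); [|exact H]; intros t.
  exact (Derive_n_Derive f n t).
Qed.

Lemma smooth_on_Derive D f : smooth_on D f -> smooth_on D (Derive f).
Proof. intros Hf n x Hx; apply ex_derive_n_Derive, Hf, Hx. Qed.

Section SmoothOnOpen.

Variable D : R -> Prop.
Hypothesis D_open : open D.

Lemma smooth_on_ext (f g : R -> R) :
  (forall x, D x -> f x = g x) -> smooth_on D f -> smooth_on D g.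
Proof.
  intros E Hf n x Hx; apply (ex_derive_n_ext_loc f); [|exact (Hf n x Hx)].
  exact (filter_imp _ _ E (D_open x Hx)).
Qed.

Lemma smooth_on_plus (f g : R -> R) :
  smooth_on D f -> smooth_on D g -> smooth_on D (fun x => f x + g x).
Proof.
  intros Hf Hg n x Hx.
  apply ex_derive_n_plus; apply (filter_imp D); auto; intros y Hy k _; auto.
Qed.

Lemma smooth_on_mult (f g : R -> R) :
  smooth_on D f -> smooth_on D g -> smooth_on D (fun x => f x * g x).
Proof.
  intros Hf Hg n; revert f g Hf Hg.
  enough (H : forall f g, smooth_on D f -> smooth_on D g ->
                forall k x, (k <= n)%nat -> D x -> ex_derive_n (fun x => f x * g x) k x)
    by (intros f g Hf Hg x; apply H; auto).
  induction n as [|n IH]; intros f g Hf Hg [|k] x Hk Hx; try exact I; [lia|].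
  apply ex_derive_n_S; [apply ex_derive_mult; [apply (Hf 1%nat)|apply (Hg 1%nat)]; auto|].
  apply (ex_derive_n_ext_loc (fun y => Derive f y * g y + f y * Derive g y)).
  - apply (filter_imp D); [|auto]; intros y Hy; symmetry.
    apply is_derive_unique, is_derive_Rmult; apply Derive_correct;
      [apply (Hf 1%nat)|apply (Hg 1%nat)]; auto.
  - pose proof (smooth_on_Derive D f Hf); pose proof (smooth_on_Derive D g Hg).
    apply ex_derive_n_plus; apply (filter_imp D); auto; intros y Hy j Hj;
      apply IH; auto; lia.
Qed.

End SmoothOnOpen.

Lemma smooth_on_Rpower a : smooth_on (fun x => 0 < x) (fun x => Rpower x a).
Proof.
  intros n; revert a; induction n as [|n IH]; intros a x Hx; [exact I|].
  apply ex_derive_n_S; [eexists; apply is_derive_Rpower, Hx|].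
  apply (ex_derive_n_ext_loc (fun y => a * Rpower y (a - 1))).
  - apply (filter_imp (fun y => 0 < y)); [|apply open_gt, Hx].
    intros y Hy; symmetry; apply is_derive_unique, is_derive_Rpower, Hy.
  - apply ex_derive_n_scal_l, IH, Hx.
Qed.

Lemma bigO_C2_Derive_n (f : R -> R) (a C d : R) (n : nat) :
  0 < d -> smooth_on (fun s => 0 < s < d) f ->
  (forall s, 0 < s < d -> forall k, (n <= k <= n + 2)%nat ->
     Rabs (Derive_n f k s) <= C * Rpower s (a - INR k)) ->
  bigO_C2 (a - INR n) (Derive_n f n) (Derive_n f (S n)) (Derive_n f (S (S n))).
Proof.
  intros Hd Hf Hb.
  assert (HC : 0 <= C).
  { pose proof (Hb (d / 2) ltac:(lra) n ltac:(lia)).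
    pose proof (Rabs_pos (Derive_n f n (d / 2))); pose proof (Rpower_pos (d / 2) (a - INR n)).
    nra. }
  exists (Rmin d 1), C; pose proof (Rmin_l d 1).
  split; [split; [apply Rmin_glb_lt|apply Rmin_r]; lra|split; [exact HC|]].
  intros s Hs; assert (Hs' : 0 < s < d) by lra.
  refine (conj (Derive_correct _ _ (Hf (S n) s Hs'))
           (conj (Derive_correct _ _ (Hf (S (S n)) s Hs')) (conj _ (conj _ _)))).
  - apply Hb; auto; lia.
  - pose proof (Hb s Hs' (S n) ltac:(lia)) as H1; rewrite S_INR in H1.
    replace (a - INR n - 1) with (a - (INR n + 1)) by ring; exact H1.
  - pose proof (Hb s Hs' (S (S n)) ltac:(lia)) as H2; rewrite !S_INR in H2.
    replace (a - INR n - 2) with (a - (INR n + 1 + 1)) by ring; exact H2.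
Qed.

Lemma is_RInt_Rpower_comb (a b m x y : R) : 0 < x <= y ->
  is_RInt (fun s => a * Rpower s (a - 1) + m * (b * Rpower s (b - 1))) x y
    ((Rpower y a + m * Rpower y b) - (Rpower x a + m * Rpower x b)).
Proof.
  intros Hxy; apply (is_RInt_derive (fun s => Rpower s a + m * Rpower s b));
    intros z Hz; rewrite Rmin_left, Rmax_right in Hz by lra.
  - apply (is_derive_plus (fun s => Rpower s a)); [|apply (is_derive_scal (fun s => Rpower s b))];
      apply is_derive_Rpower; lra.
  - apply (ex_derive_continuous
      (fun s => a * Rpower s (a - 1) + m * (b * Rpower s (b - 1)))); eexists.
    apply (is_derive_plus (fun s => a * Rpower s (a - 1)));
      [|apply (is_derive_scal (fun s => b * Rpower s (b - 1)))];
      apply is_derive_scal_Rpower; lra.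
Qed.

Lemma le_of_forall_sub_Rpower (a c L rho : R) : 0 < a -> 0 < rho ->
  (forall x, 0 < x <= rho -> c - Rpower x a <= L) -> c <= L.
Proof.
  intros Ha Hrho H; apply Rnot_lt_le; intros HLc.
  destruct (Rpower_small a ((c - L) / 2) Ha ltac:(lra)) as (del & Hdel & Hsmall).
  pose proof (Rmin_l rho (del / 2)); pose proof (Rmin_r rho (del / 2)).
  assert (Hx : 0 < Rmin rho (del / 2)) by (apply Rmin_glb_lt; lra).
  pose proof (H _ (conj Hx (Rmin_l _ _))); pose proof (Hsmall (Rmin rho (del / 2)) ltac:(lra)).
  lra.
Qed.

Lemma is_RInt_gen_at_right_0_lub (f : R -> R) (rho L : R) : 0 < rho ->
  (forall s, 0 < s <= rho -> continuous f s) -> (forall s, 0 < s <= rho -> 0 <= f s) ->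
  is_lub (fun v => exists x, 0 < x <= rho /\ v = RInt f x rho) L ->
  is_RInt_gen f (at_right 0) (at_point rho) L.
Proof.
  intros Hrho Hc Hpos [HL1 HL2].
  assert (Hex : forall x y, 0 < x <= y -> y <= rho -> ex_RInt f x y).
  { intros x y Hxy Hy; apply (ex_RInt_continuous (V := R_CompleteNormedModule)).
    intros z Hz; rewrite Rmin_left, Rmax_right in Hz by lra; apply Hc; lra. }
  intros Q [e HQ].
  assert (Hx0 : exists x0, 0 < x0 <= rho /\ L - e < RInt f x0 rho).
  { apply NNPP; intros Hn; enough (L <= L - e) by (destruct e; simpl in *; lra).
    apply HL2; intros v (x & Hx & ->); apply Rnot_lt_le; intros Hlt; apply Hn; eauto. }
  destruct Hx0 as (x0 & Hx0 & HIx0).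
  apply (Filter_prod _ _ _ (fun x => 0 < x < x0) (fun y => y = rho)); [|reflexivity|].
  - exists (mkposreal x0 (proj1 Hx0)); intros y Hy Hy0; split; [exact Hy0|].
    apply Rabs_lt_between' in Hy; simpl in Hy; lra.
  - intros x y Hx ->; exists (RInt f x rho); split.
    + apply (RInt_correct (V := R_CompleteNormedModule)), Hex; lra.
    + assert (HIx : RInt f x rho <= L) by (apply HL1; exists x; split; [lra|reflexivity]).
      assert (Hmono : RInt f x0 rho <= RInt f x rho).
      { rewrite <- (RInt_Chasles f x x0 rho) by (apply Hex; lra).
        pose proof (RInt_ge_0 f x x0 ltac:(lra) (Hex x x0 ltac:(lra) ltac:(lra))
                      (fun s Hs => Hpos s ltac:(lra))).
        unfold plus; simpl; lra. }
      apply HQ, Rabs_lt_between'; destruct e as [e He]; simpl in *; lra.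
Qed.

Lemma RInt_gen_at_right_0_near_Rpower (f : R -> R) (a b C rho : R) :
  0 < a -> 0 < b -> 0 <= C -> 0 < rho ->
  (forall s, 0 < s <= rho -> continuous f s) -> (forall s, 0 < s <= rho -> 0 <= f s) ->
  (forall s, 0 < s <= rho -> Rabs (f s - a * Rpower s (a - 1)) <= C * Rpower s (b - 1)) ->
  is_RInt_gen f (at_right 0) (at_point rho) (RInt_gen f (at_right 0) (at_point rho)) /\
  Rabs (RInt_gen f (at_right 0) (at_point rho) - Rpower rho a) <= C / b * Rpower rho b.
Proof.
  intros Ha Hb HC Hrho Hc Hpos Hf; set (M := C / b).
  assert (HM : 0 <= M) by (apply Rdiv_le_0_compat; lra).
  assert (Hbetween : forall x, 0 < x <= rho ->
    (Rpower rho a + - M * Rpower rho b) - (Rpower x a + - M * Rpower x b) <= RInt f x rho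
    <= (Rpower rho a + M * Rpower rho b) - (Rpower x a + M * Rpower x b)).
  { intros x Hx.
    assert (Hex : ex_RInt f x rho).
    { apply (ex_RInt_continuous (V := R_CompleteNormedModule)).
      intros z Hz; rewrite Rmin_left, Rmax_right in Hz by lra; apply Hc; lra. }
    rewrite <- (is_RInt_unique _ _ _ _ (is_RInt_Rpower_comb a b (- M) x rho Hx)),
      <- (is_RInt_unique _ _ _ _ (is_RInt_Rpower_comb a b M x rho Hx)).
    split; apply RInt_le; try (lra || exact Hex || (eexists; apply is_RInt_Rpower_comb; lra));
      intros s Hs; specialize (Hf s ltac:(lra)); apply Rabs_le_between' in Hf;
      assert (M * (b * Rpower s (b - 1)) = C * Rpower s (b - 1)) by (unfold M; field; lra);
      lra. }
  destruct (completeness (fun v => exists x, 0 < x <= rho /\ v = RInt f x rho))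
    as [L [HL1 HL2]].
  - exists (Rpower rho a + M * Rpower rho b); intros v (x & Hx & ->).
    pose proof (Hbetween x Hx); pose proof (Rpower_pos x a); pose proof (Rpower_pos x b); nra.
  - exists (RInt f rho rho), rho; split; [lra|reflexivity].
  - assert (HL : is_RInt_gen f (at_right 0) (at_point rho) L)
      by (apply is_RInt_gen_at_right_0_lub; auto; split; auto).
    rewrite (is_RInt_gen_unique _ _ HL); split; [exact HL|].
    apply Rabs_le_between'; split.
    + apply (le_of_forall_sub_Rpower a _ _ rho Ha Hrho); intros x Hx.
      pose proof (HL1 _ (ex_intro _ x (conj Hx eq_refl))).
      pose proof (Hbetween x Hx); pose proof (Rpower_pos x b); nra.
    + apply HL2; intros v (x & Hx & ->).
      pose proof (Hbetween x Hx); pose proof (Rpower_pos x a); pose proof (Rpower_pos x b); nra.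
Qed.

Lemma is_derive_RInt_gen_at_right_0 (f K : R -> R) (d x : R) : 0 < x < d ->
  (forall s, 0 < s < d -> continuous f s) ->
  (forall r, 0 < r < d -> is_RInt_gen f (at_right 0) (at_point r) (K r)) ->
  is_derive K x (f x).
Proof.
  intros Hx Hc HK.
  assert (Hex : forall y, 0 < y < d -> is_RInt f x y (RInt f x y)).
  { intros y Hy; apply (RInt_correct (V := R_CompleteNormedModule)).
    apply (ex_RInt_continuous (V := R_CompleteNormedModule)); intros z Hz; apply Hc; split.
    - eapply Rlt_le_trans; [|apply Hz]; apply Rmin_glb_lt; lra.
    - eapply Rle_lt_trans; [apply Hz|]; apply Rmax_lub_lt; lra. }
  apply (is_derive_ext_open _ (fun y => K x + RInt f x y) K x _ (open_interval_0 d) Hx).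
  - intros y Hy; rewrite <- (is_RInt_gen_unique _ _ (HK y Hy)); symmetry.
    apply (is_RInt_gen_unique (V := R_CompleteNormedModule)).
    apply (is_RInt_gen_Chasles f x); [apply HK, Hx|apply is_RInt_gen_at_point, Hex, Hy].
  - eapply is_derive_eq;
      [apply (is_derive_plus (fun _ => K x) (fun y => RInt f x y) x zero (f x))|apply plus_zero_l].
    + apply is_derive_const.
    + apply (is_derive_RInt f (fun y => RInt f x y) x x); [|apply Hc, Hx].
      exact (filter_imp _ _ Hex (open_interval_0 d x Hx)).
Qed.

Lemma Derive_n_3_of_is_derive (D : R -> Prop) (K F F1 F2 : R -> R) : open D ->
  (forall y, D y -> is_derive K y (F y)) -> (forall y, D y -> is_derive F y (F1 y)) ->
  (forall y, D y -> is_derive F1 y (F2 y)) ->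
  forall y, D y -> ex_derive_n K 3 y /\
    Derive K y = F y /\ Derive_n K 2 y = F1 y /\ Derive_n K 3 y = F2 y.
Proof.
  intros HD HK HF HF1.
  assert (E1 : forall t, D t -> F t = Derive K t)
    by (intros; symmetry; apply is_derive_unique; auto).
  assert (HK2 : forall y, D y -> is_derive (Derive K) y (F1 y))
    by (intros y Hy; apply (is_derive_ext_open D F); auto).
  assert (E2 : forall t, D t -> F1 t = Derive_n K 2 t)
    by (intros; symmetry; apply is_derive_unique; auto).
  assert (HK3 : forall y, D y -> is_derive (Derive_n K 2) y (F2 y))
    by (intros y Hy; apply (is_derive_ext_open D F1); auto).
  intros y Hy; repeat split.
  - exists (F2 y); apply HK3, Hy.
  - symmetry; apply E1, Hy.
  - symmetry; apply E2, Hy.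
  - apply is_derive_unique, HK3, Hy.
Qed.

Lemma RInt_gen_at_right_0_on (f K : R -> R) (a b C d : R) :
  0 < a -> 0 < b -> 0 <= C ->
  (forall r, K r = RInt_gen f (at_right 0) (at_point r)) ->
  (forall s, 0 < s < d -> continuous f s /\ 0 <= f s /\
     Rabs (f s - a * Rpower s (a - 1)) <= C * Rpower s (b - 1)) ->
  forall rho, 0 < rho < d ->
    is_RInt_gen f (at_right 0) (at_point rho) (K rho) /\
    Rabs (K rho - Rpower rho a) <= C / b * Rpower rho b /\ is_derive K rho (f rho).
Proof.
  intros Ha Hb HC HK Hf.
  assert (HKint : forall rho, 0 < rho < d ->
    is_RInt_gen f (at_right 0) (at_point rho) (K rho) /\
    Rabs (K rho - Rpower rho a) <= C / b * Rpower rho b).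
  { intros rho Hrho; rewrite HK.
    apply RInt_gen_at_right_0_near_Rpower; try lra; intros s Hs; apply Hf; lra. }
  intros rho Hrho; split; [apply HKint, Hrho|split; [apply HKint, Hrho|]].
  apply (is_derive_RInt_gen_at_right_0 f K d); auto.
  - intros s Hs; apply Hf, Hs.
  - intros r Hr; apply HKint, Hr.
Qed.

Lemma RInt_gen_at_right_0_expansion (f G G1 G2 K : R -> R) (a b : R) :
  0 < a -> 0 < b -> bigO_C2 (b - 1) G G1 G2 ->
  (forall r, K r = RInt_gen f (at_right 0) (at_point r)) ->
  (exists d, 0 < d /\ forall s, 0 < s < d ->
     f s = a * Rpower s (a - 1) + G s /\ 0 <= f s) ->
  exists d M, 0 < d /\ forall rho, 0 < rho < d ->
    is_RInt_gen f (at_right 0) (at_point rho) (K rho) /\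
    ex_derive_n K 3 rho /\ is_derive K rho (f rho) /\
    Rabs (K rho - Rpower rho a) <= M * Rpower rho b /\
    Rabs (Derive K rho - a * Rpower rho (a - 1)) <= M * Rpower rho (b - 1) /\
    Rabs (Derive_n K 2 rho - a * (a - 1) * Rpower rho (a - 2))
      <= M * Rpower rho (b - 2) /\
    Rabs (Derive_n K 3 rho - a * (a - 1) * (a - 2) * Rpower rho (a - 3))
      <= M * Rpower rho (b - 3).
Proof.
  intros Ha Hb (dG & C & HdG & HC & HG) HK (d1 & Hd1 & Hf).
  set (d := Rmin d1 dG); assert (Hd : 0 < d) by (apply Rmin_glb_lt; lra).
  assert (Hin : forall s, 0 < s < d -> 0 < s < d1 /\ 0 < s < dG)
    by (intros; apply interval_0_Rmin; auto).
  set (F := fun s => a * Rpower s (a - 1) + G s).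
  set (F1 := fun s => a * (a - 1) * Rpower s (a - 1 - 1) + G1 s).
  set (F2 := fun s => a * (a - 1) * (a - 1 - 1) * Rpower s (a - 1 - 1 - 1) + G2 s).
  assert (HF : forall s, 0 < s < d -> is_derive F s (F1 s) /\ is_derive F1 s (F2 s)).
  { intros s Hs; destruct (HG s (proj2 (Hin s Hs))) as (D1 & D2 & _); split;
      apply (is_derive_plus _ _ _ _ _ (is_derive_scal_Rpower _ _ s ltac:(lra))); assumption. }
  assert (HfF : forall s, 0 < s < d -> f s = F s) by (intros; apply Hf, Hin; auto).
  assert (Hcont : forall s, 0 < s < d -> continuous f s).
  { intros s Hs; apply (continuous_ext_loc _ F).
    - exact (filter_imp _ _ (fun t Ht => eq_sym (HfF t Ht)) (open_interval_0 d s Hs)).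
    - apply (ex_derive_continuous F); eexists; apply HF, Hs. }
  assert (HKint : forall rho, 0 < rho < d ->
    is_RInt_gen f (at_right 0) (at_point rho) (K rho) /\
    Rabs (K rho - Rpower rho a) <= C / b * Rpower rho b /\ is_derive K rho (f rho)).
  { apply (RInt_gen_at_right_0_on f K a b C d); auto; intros s Hs.
    refine (conj (Hcont s Hs) (conj (proj2 (Hf s (proj1 (Hin s Hs)))) _)).
    rewrite HfF by exact Hs; unfold F; rewrite Rplus_minus_l; apply HG, Hin, Hs. }
  exists d, (C / b + C); split; [exact Hd|]; intros rho Hrho.
  destruct (HKint rho Hrho) as (Hint & Hbnd & Hder).
  assert (HK' : forall y, 0 < y < d -> is_derive K y (F y))
    by (intros y Hy; rewrite <- HfF by exact Hy; apply HKint, Hy).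
  destruct (Derive_n_3_of_is_derive _ K F F1 F2 (open_interval_0 d) HK'
    (fun y Hy => proj1 (HF y Hy)) (fun y Hy => proj2 (HF y Hy)) rho Hrho)
    as (Hex3 & -> & -> & ->).
  destruct (HG rho (proj2 (Hin rho Hrho))) as (_ & _ & B0 & B1 & B2).
  replace (b - 1 - 1) with (b - 2) in B1 by ring; replace (b - 1 - 2) with (b - 3) in B2 by ring.
  assert (HCb : 0 <= C / b) by (apply Rdiv_le_0_compat; lra).
  pose proof (Rpower_pos rho b); pose proof (Rpower_pos rho (b - 1));
    pose proof (Rpower_pos rho (b - 2)); pose proof (Rpower_pos rho (b - 3)).
  unfold F, F1, F2.
  replace (a - 1 - 1 - 1) with (a - 3) by ring; replace (a - 1 - 1) with (a - 2) by ring.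
  rewrite !Rplus_minus_l.
  refine (conj Hint (conj Hex3 (conj Hder (conj _ (conj _ (conj _ _)))))); nra.
Qed.

Section Pressure.

Variables (eps gamma d0 C : R) (p P : R -> R).
Hypothesis gamma_range : 1 < gamma < 3.
Hypothesis p_smooth : smooth_on (fun x => 0 < x) p.
Hypothesis d0_pos : 0 < d0.
Hypothesis p_near0 :
  forall s, 0 < s < d0 -> p s = kappa gamma * Rpower s gamma * (1 + P s).
Hypothesis P_bounds : forall s, 0 < s < d0 -> forall n, (n <= 4)%nat ->
  Rabs (Derive_n P n s) <= C * Rpower s (gamma - 1 - INR n).

Local Notation th := (theta gamma).

Lemma theta_pos : 0 < th.
Proof. unfold theta; lra. Qed.

Lemma Rpower_gamma s : 0 < s -> Rpower s gamma = Rpower s (2 * th) * s.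
Proof. intros Hs; rewrite <- Rpower_plus_1 by exact Hs; f_equal; unfold theta; field. Qed.

Lemma kappa_pos : 0 < kappa gamma.
Proof. unfold kappa; apply Rdiv_lt_0_compat; nra. Qed.

Lemma P_smooth : smooth_on (fun s => 0 < s < d0) P.
Proof.
  apply (smooth_on_ext _ (open_interval_0 d0)
           (fun s => p s * (/ kappa gamma * Rpower s (- gamma)) + -1)).
  - intros s Hs; rewrite p_near0, Rpower_Ropp by exact Hs.
    pose proof kappa_pos; pose proof (Rpower_pos s gamma); field; lra.
  - apply smooth_on_plus; [apply open_interval_0| |intros n x _; apply ex_derive_n_const].
    apply smooth_on_mult; [apply open_interval_0|intros n x Hx; apply p_smooth; lra|].
    intros n x Hx; apply ex_derive_n_scal_l, smooth_on_Rpower; lra.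
Qed.

Lemma P_bigO : bigO_C2 (2 * th) P (Derive P) (Derive_n P 2).
Proof.
  replace (2 * th) with (gamma - 1 - INR 0) by (simpl; unfold theta; field).
  exact (bigO_C2_Derive_n P _ C d0 0 d0_pos P_smooth
           (fun s Hs k Hk => P_bounds s Hs k ltac:(lia))).
Qed.

Lemma Derive_P_bigO : bigO_C2 (2 * th - 1) (Derive P) (Derive_n P 2) (Derive_n P 3).
Proof.
  replace (2 * th - 1) with (gamma - 1 - INR 1) by (simpl; unfold theta; field).
  exact (bigO_C2_Derive_n P _ C d0 1 d0_pos P_smooth
           (fun s Hs k Hk => P_bounds s Hs k ltac:(lia))).
Qed.

Definition dp_corr (s : R) : R := P s + s * / gamma * Derive P s.

Definition denom_corr (s : R) : R :=
  eps * kappa gamma * Rpower s (2 * th) * (1 + P s).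

Lemma Derive_p_near0 s : 0 < s < d0 ->
  Derive p s = th ^ 2 * Rpower s (2 * th) * (1 + dp_corr s).
Proof.
  intros Hs.
  assert (Hp' : is_derive p s (kappa gamma * gamma * Rpower s (gamma - 1) * (1 + P s)
                               + kappa gamma * Rpower s gamma * Derive P s)).
  { apply (is_derive_ext_open _ (fun t => kappa gamma * Rpower t gamma * (1 + P t)) p s _
             (open_interval_0 d0) Hs).
    - intros t Ht; symmetry; apply p_near0, Ht.
    - eapply is_derive_eq; [apply is_derive_Rmult;
        [apply is_derive_scal_Rpower; lra|apply (is_derive_plus (fun _ => 1) P)];
        [apply is_derive_const|apply Derive_correct, (P_smooth 1%nat), Hs]|].
      rewrite plus_zero_l; reflexivity. }
  rewrite (is_derive_unique _ _ _ Hp'); unfold dp_corr.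
  replace (gamma - 1) with (2 * th) by (unfold theta; field).
  rewrite Rpower_gamma by lra; unfold kappa, theta; field; lra.
Qed.

Lemma denom_near0 s : 0 < s < d0 -> s + eps * p s = s * (1 + denom_corr s).
Proof.
  intros Hs; rewrite p_near0 by exact Hs; unfold denom_corr.
  rewrite Rpower_gamma by lra; ring.
Qed.

Lemma k_integrand_near0 s : 0 < s < d0 -> 0 < 1 + denom_corr s ->
  k_integrand eps p s = th * Rpower s (th - 1) * sqrt (1 + dp_corr s) / (1 + denom_corr s).
Proof.
  intros Hs HD; unfold k_integrand; rewrite Derive_p_near0, denom_near0 by exact Hs.
  pose proof theta_pos; pose proof (Rpower_pos s th).
  replace (th ^ 2 * Rpower s (2 * th)) with ((th * Rpower s th) ^ 2)
    by (replace (2 * th) with (th + th) by ring; rewrite Rpower_plus; ring).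
  rewrite sqrt_mult_alt, sqrt_pow2 by (apply pow2_ge_0 || nra).
  replace th with (th - 1 + 1) at 2 by ring; rewrite Rpower_plus_1 by lra.
  field; lra.
Qed.

Lemma dp_corr_bigO : exists B1 B2, bigO_C2 (2 * th) dp_corr B1 B2.
Proof.
  unfold dp_corr; eexists _, _; eapply (bigO_C2_plus _ _ _ _ _ _ _ P_bigO).
  eapply bigO_C2_weaken; [|apply (bigO_C2_mult _ _ _ _ _ _ _ _
    (bigO_C2_mult _ _ _ _ _ _ _ _ bigO_C2_id (bigO_C2_const (/ gamma))) Derive_P_bigO)].
  lra.
Qed.

Lemma denom_corr_bigO : exists D1 D2, bigO_C2 (2 * th) denom_corr D1 D2.
Proof.
  pose proof theta_pos.
  eexists _, _; eapply bigO_C2_weaken; [|apply (bigO_C2_mult _ _ _ _ _ _ _ _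
    (bigO_C2_mult _ _ _ _ _ _ _ _ (bigO_C2_const (eps * kappa gamma)) (bigO_C2_Rpower (2 * th)))
    (bigO_C2_plus _ _ _ _ _ _ _ (bigO_C2_const 1)
       (bigO_C2_weaken (2 * th) 0 _ _ _ ltac:(lra) P_bigO)))].
  lra.
Qed.

(* With [U] and [V] as below, the integrand is [th * s^(th - 1) * (1 + U) * (1 + V)]. *)
Definition k_corr (s : R) : R :=
  let U := sqrt (1 + dp_corr s) - 1 in
  let V := / (1 + denom_corr s) - 1 in
  th * Rpower s (th - 1) * (U + V + U * V).

Lemma k_corr_bigO : exists G1 G2, bigO_C2 (3 * th - 1) k_corr G1 G2.
Proof.
  pose proof theta_pos.
  destruct dp_corr_bigO as (B1 & B2 & HB); destruct denom_corr_bigO as (D1 & D2 & HD).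
  pose proof (bigO_C2_comp _ _ _ _ _ _ _ 1 HB ltac:(lra) ltac:(lra) sqrt_1_plus_C2_bounded) as HU.
  pose proof (bigO_C2_comp _ _ _ _ _ _ _ 16 HD ltac:(lra) ltac:(lra) inv_1_plus_C2_bounded) as HV.
  eexists _, _; eapply bigO_C2_weaken; [|apply (bigO_C2_mult _ _ _ _ _ _ _ _
    (bigO_C2_mult _ _ _ _ _ _ _ _ (bigO_C2_const th) (bigO_C2_Rpower (th - 1)))
    (bigO_C2_plus _ _ _ _ _ _ _ (bigO_C2_plus _ _ _ _ _ _ _ HU HV)
       (bigO_C2_weaken (2 * th + 2 * th) (2 * th) _ _ _ ltac:(lra)
          (bigO_C2_mult _ _ _ _ _ _ _ _ HU HV))))].
  lra.
Qed.

Lemma k_integrand_expansion : exists d, 0 < d /\ forall s, 0 < s < d ->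
  k_integrand eps p s = th * Rpower s (th - 1) + k_corr s /\ 0 <= k_integrand eps p s.
Proof.
  pose proof theta_pos.
  destruct dp_corr_bigO as (B1 & B2 & HB); destruct denom_corr_bigO as (D1 & D2 & HD).
  destruct (bigO_C2_small _ _ _ _ HB ltac:(lra) (1/2)) as (dB & HdB & HsB); [lra|].
  destruct (bigO_C2_small _ _ _ _ HD ltac:(lra) (1/2)) as (dD & HdD & HsD); [lra|].
  exists (Rmin d0 (Rmin dB dD)); split; [repeat apply Rmin_glb_lt; lra|].
  intros s Hs; apply interval_0_Rmin in Hs as [Hs0 Hs].
  apply interval_0_Rmin in Hs as [HsB' HsD'].
  specialize (HsB s HsB'); specialize (HsD s HsD').
  apply Rabs_le_between in HsB; apply Rabs_le_between in HsD.
  pose proof (Rpower_pos s (th - 1)); pose proof (sqrt_pos (1 + dp_corr s)).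
  rewrite k_integrand_near0 by lra; unfold k_corr; split.
  - field; lra.
  - apply Rdiv_le_0_compat; [|lra]; apply Rmult_le_pos; [apply Rmult_le_pos|]; lra.
Qed.

End Pressure.

Theorem lemma2p1 (eps gamma : R) (p : R -> R) :
  0 < eps ->
  1 < gamma < 3 ->
  (* p smooth on (0, oo) *)
  (forall (n : nat) (x : R), 0 < x -> ex_derive_n p n x) ->
  (* p' > 0 on (0, oo) *)
  (forall x : R, 0 < x -> 0 < Derive p x) ->
  (* small-rho structure of the pressure *)
  (exists (d0 C : R) (P : R -> R), 0 < d0 /\
     forall rho : R, 0 < rho < d0 ->
       p rho = kappa gamma * Rpower rho gamma * (1 + P rho) /\
       forall n : nat, (n <= 4)%nat ->
         Rabs (Derive_n P n rho) <= C * Rpower rho (gamma - 1 - INR n)) ->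
  exists (d M : R), 0 < d /\
    forall rho : R, 0 < rho < d ->
      is_RInt_gen (k_integrand eps p) (at_right 0) (at_point rho)
        (k_fun eps p rho) /\
      ex_derive_n (k_fun eps p) 3 rho /\
      is_derive (k_fun eps p) rho (sqrt (Derive p rho) / (rho + eps * p rho)) /\
      Rabs (k_fun eps p rho - Rpower rho (theta gamma))
        <= M * Rpower rho (3 * theta gamma) /\
      Rabs (Derive (k_fun eps p) rho
            - theta gamma * Rpower rho (theta gamma - 1))
        <= M * Rpower rho (3 * theta gamma - 1) /\
      Rabs (Derive_n (k_fun eps p) 2 rho
            - theta gamma * (theta gamma - 1) * Rpower rho (theta gamma - 2))
        <= M * Rpower rho (3 * theta gamma - 2) /\
      Rabs (Derive_n (k_fun eps p) 3 rho
            - theta gamma * (theta gamma - 1) * (theta gamma - 2)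
              * Rpower rho (theta gamma - 3))
        <= M * Rpower rho (3 * theta gamma - 3).
Proof.
  intros _ Hgamma Hsmooth _ (d0 & C & P & Hd0 & HP).
  assert (Hnear : forall s, 0 < s < d0 -> p s = kappa gamma * Rpower s gamma * (1 + P s))
    by (intros s Hs; apply HP, Hs).
  assert (Hbounds : forall s, 0 < s < d0 -> forall n, (n <= 4)%nat ->
            Rabs (Derive_n P n s) <= C * Rpower s (gamma - 1 - INR n))
    by (intros s Hs; apply HP, Hs).
  pose proof (theta_pos gamma Hgamma).
  destruct (k_corr_bigO eps gamma d0 C p P Hgamma Hsmooth Hd0 Hnear Hbounds) as (G1 & G2 & HG).
  apply (RInt_gen_at_right_0_expansion (k_integrand eps p) (k_corr eps gamma P) G1 G2);
    [lra|lra|exact HG|reflexivity|].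
  exact (k_integrand_expansion eps gamma d0 C p P Hgamma Hsmooth Hd0 Hnear Hbounds).
Qed.
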